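(* Let $X$ be a complex Banach space. Let $\mathcal{G}$ be an algebra with unit, $\mathcal{F}$ a unital subalgebra of $\mathcal{G}$, $\Phi:\mathcal{F}\to\mathcal{C}(X)$ a calculus, and $\mathcal{E}\subseteq\mathcal{F}$ a subalgebra which is an algebraic core for $\Phi$. Let $\mathcal{E}'$ be a subalgebra of $\mathcal{G}$ with $\mathcal{E}\subseteq\mathcal{E}'$ and $\Psi:\mathcal{E}'\to\mathcal{L}(X)$ an algebra representation with $\Psi|_{\mathcal{E}}=\Phi|_{\mathcal{E}}$. Let $\mathcal{F}':=\mathrm{anc}(\mathcal{E}',\mathcal{G},\Psi)$ and denote again by $\Psi:\mathcal{F}'\to\mathcal{C}(X)$ the unique calculus on $\mathcal{F}'$ extending $\Psi$. Let $f\in\mathcal{F}$. Then $f\in\mathcal{F}'$ and $\Phi(f)=\Psi(f)$ if any one of the following conditions holds: (1) $f\in\mathcal{F}'$ and $\Psi(f)\in\mathcal{L}(X)$; (2) $f\in\mathcal{F}'$, $\Psi(f)$ is densely defined, and $\Phi(f)\in\mathcal{L}(X)$; (3) for each $e'\in\mathcal{E}'$ there is a $\Psi$-anchor set $\mathcal{M}_{e'}\subseteq\mathcal{E}'$ such that $\mathcal{M}_{e'}e'\subseteq\mathcal{D}'\cdot[f]_{\mathcal{E}}$, where $\mathcal{D}':=\{d'\in\mathcal{F}': d'\mathcal{E}\subseteq\mathcal{E}'\}$; (4) $\mathcal{E}'=\mathcal{E}$; (5) $\mathrm{Z}(\mathcal{E}')\cap[f]_{\mathcal{E}}$ is a $\Psi$-anchor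 set; (6) $\mathcal{E}\subseteq\mathrm{Z}(\mathcal{E}')$; (7) $\mathcal{E}'$ is commutative.
   Context: Algebras need not be commutative; subalgebras need not be unital. $\mathcal{L}(X)$, $\mathcal{C}(X)$: bounded, resp. closed linear operators on $X$; operator inclusions are graph inclusions, sums/products have natural domains, ''$Tx=y$'' means $x\in\mathrm{dom}(T)$, $Tx=y$. Proto-calculus $\Phi:\mathcal{F}\to\mathcal{C}(X)$: (FC1) $\Phi(\mathbf{1})=I$; (FC2) $\lambda\Phi(f)\subseteq\Phi(\lambda f)$, $\Phi(f)+\Phi(g)\subseteq\Phi(f+g)$; (FC3) $\Phi(f)\Phi(g)\subseteq\Phi(fg)$, $\mathrm{dom}(\Phi(f)\Phi(g))=\mathrm{dom}(\Phi(g))\cap\mathrm{dom}(\Phi(fg))$. For a subset $\mathcal{E}$ and element $f$, $[f]_{\mathcal{E}}=\{e\in\mathcal{E}:ef\in\mathcal{E}\}$. $\mathcal{E}\subseteq\{g:\Phi(g)\in\mathcal{L}(X)\}$ is an algebraic core for $\Phi$ if for all $f\in\mathcal{F}$, $x,y\in X$: $\Phi(f)x=y\iff\Phi(ef)x=\Phi(e)y$ for all $e\in[f]_{\mathcal{E}}$; a calculus is a proto-calculus for which the set of $\Phi$-bounded elements is an algebraic core. For a representation $\Psi$ on $\mathcal{E}'$, a $\Psi$-anchor set is a nonempty $\mathcal{M}\subseteq\mathcal{E}'$ with $\bigcap_{e\in\mathcal{M}}\ker\Psi(e)=\{0\}$. $\mathrm{anc}(\mathcal{E}',\mathcal{G},\Psi):=\{g\in\mathcal{G}: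 [e'g]_{\mathcal{E}'}$ is a $\Psi$-anchor set for all $e'\in\mathcal{E}'\}$; in the present situation this is a unital subalgebra of $\mathcal{G}$ containing $\mathcal{E}'$, and the calculus extending $\Psi$ to it is given by $\Psi(g)x=y\iff\Psi(e'g)x=\Psi(e')y$ for all $e'\in[g]_{\mathcal{E}'}$. $\mathrm{Z}(\mathcal{E}')=\{d\in\mathcal{E}': de=ed\ \forall e\in\mathcal{E}'\}$ is the center. $\mathcal{D}'\cdot[f]_{\mathcal{E}}=\{de: d\in\mathcal{D}', e\in[f]_{\mathcal{E}}\}$. *)

From HB Require Import structures.
From mathcomp Require Import all_boot all_order all_algebra.
From mathcomp Require Import all_classical all_reals topology normedtype.
From mathcomp Require Import complex.

Set Implicit Arguments.
Unset Strict Implicit.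
Unset Printing Implicit Defensive.

Import Order.TTheory GRing.Theory Num.Theory.
Local Open Scope ring_scope.
Local Open Scope classical_set_scope.

(* "T x y" reads "x \in dom T and T x = y".                            *)
Section Operators.
Variables (R : realType) (X : normedModType R[i]).

Definition op := X -> X -> Prop.

Definition op_dom (T : op) : set X := [set x | exists y, T x y].

Definition op_sub (S T : op) : Prop := forall x y, S x y -> T x y.
Definition op_eq (S T : op) : Prop := forall x y, S x y <-> T x y.

Definition op_id : op := fun x y => y = x.

Definition op_add (S T : op) : op :=
  fun x y => exists y1 y2, [/\ S x y1, T x y2 & y = y1 + y2].
Definition op_scale (l : R[i]) (T : op) : op :=
  fun x y => exists y', T x y' /\ y = l *: y'.
(* op_comp S T = S T  (first T, then S) *)
Definition op_comp (S T : op) : op :=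
  fun x z => exists y, T x y /\ S y z.

Definition is_linop (T : op) : Prop :=
  [/\ T 0 0,
      (forall (a : R[i]) x y x' y', T x y -> T x' y' ->
          T (a *: x + x') (a *: y + y'))
    & (forall x y y', T x y -> T x y' -> y = y')].

Definition is_closed_op (T : op) : Prop :=
  is_linop T /\ closed [set p : X * X | T p.1 p.2].

Definition is_bounded_op (T : op) : Prop :=
  exists A : X -> X,
    [/\ (forall (a : R[i]) u v, A (a *: u + v) = a *: A u + A v),
        continuous A
      & forall x y, T x y <-> y = A x].

Definition densely_defined (T : op) : Prop := closure (op_dom T) = setT.

End Operators.

Section Calculus.
Variables (R : realType) (X : normedModType R[i]) (G : algType R[i]).

Definition is_subalgebra (S : set G) : Prop :=
  [/\ S 0,
      (forall a b, S a -> S b -> S (a + b)),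
      (forall a b, S a -> S b -> S (a * b))
    & (forall (l : R[i]) a, S a -> S (l *: a))].

Definition is_unital_subalgebra (S : set G) : Prop := is_subalgebra S /\ S 1.

Definition bracket (E : set G) (f : G) : set G := [set e | E e /\ E (e * f)].

Definition is_proto_calculus (F : set G) (Phi : G -> op X) : Prop :=
  [/\ (forall f, F f -> is_closed_op (Phi f)),
      op_eq (Phi 1) (@op_id R X),
      (forall (l : R[i]) f, F f -> op_sub (op_scale l (Phi f)) (Phi (l *: f))),
      (forall f g, F f -> F g -> op_sub (op_add (Phi f) (Phi g)) (Phi (f + g)))
    &
      ((forall f g, F f -> F g -> op_sub (op_comp (Phi f) (Phi g)) (Phi (f * g))) /\
       (forall f g, F f -> F g ->
          op_dom (op_comp (Phi f) (Phi g)) = op_dom (Phi g) `&` op_dom (Phi (f * g))))].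

Definition bounded_elems (F : set G) (Phi : G -> op X) : set G :=
  [set g | F g /\ is_bounded_op (Phi g)].

Definition algebraic_core (F : set G) (Phi : G -> op X) (E : set G) : Prop :=
  E `<=` bounded_elems F Phi /\
  forall f, F f -> forall x y,
    Phi f x y <->
    (forall e, bracket E f e -> exists w, Phi e y w /\ Phi (e * f) x w).

Definition is_calculus (F : set G) (Phi : G -> op X) : Prop :=
  is_proto_calculus F Phi /\ algebraic_core F Phi (bounded_elems F Phi).

Definition is_representation (E' : set G) (Psi : G -> op X) : Prop :=
  [/\ (forall e, E' e -> is_bounded_op (Psi e)),
      (forall a b, E' a -> E' b -> op_eq (Psi (a + b)) (op_add (Psi a) (Psi b))),
      (forall a b, E' a -> E' b -> op_eq (Psi (a * b)) (op_comp (Psi a) (Psi b)))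
    & (forall (l : R[i]) a, E' a -> op_eq (Psi (l *: a)) (op_scale l (Psi a)))].

Definition anchor_set (E' : set G) (Psi : G -> op X) (M : set G) : Prop :=
  [/\ M `<=` E', M !=set0 & forall x : X, (forall e, M e -> Psi e x 0) -> x = 0].

Definition anc (E' : set G) (Psi : G -> op X) : set G :=
  [set g | forall e', E' e' -> anchor_set E' Psi (bracket E' (e' * g))].

Definition anc_calc (E' : set G) (Psi : G -> op X) : G -> op X :=
  fun g x y => forall e', bracket E' g e' -> exists w, Psi e' y w /\ Psi (e' * g) x w.

Definition alg_center (E' : set G) : set G :=
  [set d | E' d /\ forall e, E' e -> d * e = e * d].

End Calculus.

(* The calculus Psi on anc(E', G, Psi) is always contained in Phi on F: the core
   property of E for Phi only tests f against [f]_E, which lies in [f]_E', and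
   Psi agrees with Phi on E.  Hence equality holds as soon as Psi(f) is
   everywhere defined, which is immediate in (1) and follows in (2) because the
   domain of Psi(f) is closed once Psi(f) sits inside a bounded operator.
   Under (3), a factorisation m e' = d e with e in [f]_E turns the identity
   Phi(e) y = Phi(e f) x into Psi(m e') y = Psi(m e' f) x, and since M is an
   anchor set this gives Psi(e') y = Psi(e' f) x.  Conditions (4)-(7) all
   produce such factorisations: with d = 1 when E' = E, and with d = e', e = m
   for m central in E'. *)

From HB Require Import structures.
From mathcomp Require Import all_boot all_order all_algebra.
From mathcomp Require Import all_classical all_reals topology normedtype.
From mathcomp Require Import complex.
Import Order.TTheory GRing.Theory Num.Theory.
Local Open Scope ring_scope.
Local Open Scope classical_set_scope.

Set Implicit Arguments.
Unset Strict Implicit.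
Unset Printing Implicit Defensive.

Section BoundedOperatorFunction.
Variables (R : realType) (X : normedModType R[i]).

Definition op_fun (T : op X) (x : X) : X := xget 0 (T x).

Variables (T : op X) (T_bounded : is_bounded_op T).

Lemma op_funE x y : T x y <-> y = op_fun T x.
Proof.
have [A [_ _ TA]] := T_bounded.
suff -> : op_fun T = A by [].
apply: funext => x'; apply/TA; rewrite /op_fun; apply: xgetPex.
by exists (A x'); apply/TA.
Qed.

Lemma op_funP x : T x (op_fun T x).
Proof. exact/op_funE. Qed.

Lemma bounded_op_dom : op_dom T = setT.
Proof. by apply/seteqP; split => // x _; exists (op_fun T x); exact: op_funP. Qed.

Lemma op_fun_linear (a : R[i]) u v :
  op_fun T (a *: u + v) = a *: op_fun T u + op_fun T v.
Proof.
have [A [Alin _ TA]] := T_bounded.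
by rewrite -!(proj1 (op_funE _ _) (proj2 (TA _ _) erefl)).
Qed.

Lemma op_fun_continuous : continuous (op_fun T).
Proof.
have [A [_ Acont TA]] := T_bounded.
suff -> : op_fun T = A by [].
by apply: funext => x; apply/esym/op_funE/TA.
Qed.

Lemma op_funB u v : op_fun T (u - v) = op_fun T u - op_fun T v.
Proof.
have op_fun0 : op_fun T 0 = 0.
  have := op_fun_linear 1 0 0; rewrite !scale1r addr0 => double.
  by apply/(addIr (op_fun T 0)); rewrite add0r -double.
have op_funN w : op_fun T (- w) = - op_fun T w.
  by have := op_fun_linear (-1) w 0; rewrite addr0 op_fun0 addr0 !scaleN1r.
by have := op_fun_linear 1 u (- v); rewrite !scale1r op_funN.
Qed.

End BoundedOperatorFunction.

Lemma closed_eq_fun (R : realType) (X : normedModType R[i]) (g h : X -> X) :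
  continuous g -> continuous h -> closed [set x | g x = h x].
Proof.
move=> gc hc.
have -> : [set x | g x = h x] = (g - h)%R @^-1` [set 0].
  apply/seteqP; split=> x /=; first by rewrite fctE => ->; rewrite subrr.
  by rewrite !fctE => /eqP; rewrite subr_eq0 => /eqP.
apply: preimage_closed.
  by move=> x _; apply: continuousB; [exact: gc | exact: hc].
exact/accessible_closed_set1/hausdorff_accessible/norm_hausdorff.
Qed.

Section AnchorCalculus.
Variables (R : realType) (X : normedModType R[i]) (G : algType R[i]).
Variables (E' : set G) (Psi : G -> op X).

Lemma anchor_setS M N :
  anchor_set E' Psi M -> M `<=` N -> N `<=` E' -> anchor_set E' Psi N.
Proof.
move=> [_ [m Mm] ker0] MN NE'; split => //; first by exists m; exact: MN.
by move=> x xN; apply: ker0 => e Me; apply/xN/MN.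
Qed.

Hypothesis E'M : forall a b, E' a -> E' b -> E' (a * b).

Lemma sub_anc M : anchor_set E' Psi M -> E' `<=` anc E' Psi.
Proof.
move=> AM e E'e e'' E'e''; have [ME' _ _] := AM.
apply: (anchor_setS AM) => [m Mm|z []//].
by split; [exact: ME' | exact: E'M (ME' _ Mm) (E'M E'e'' E'e)].
Qed.

Hypothesis Psi_rep : is_representation E' Psi.

Local Notation psi e := (op_fun (Psi e)).

Let Psi_bounded e : E' e -> is_bounded_op (Psi e).
Proof. by case: Psi_rep => + _ _ _; apply. Qed.

Lemma op_fun_repP e x : E' e -> Psi e x (psi e x).
Proof. by move=> E'e; apply: op_funP; exact: Psi_bounded. Qed.

Lemma op_fun_repE e x y : E' e -> Psi e x y -> y = psi e x.
Proof. by move=> E'e /(op_funE (Psi_bounded E'e)). Qed.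

Lemma op_fun_repM a b x : E' a -> E' b -> psi (a * b) x = psi a (psi b x).
Proof.
case: Psi_rep => _ _ PsiM _ E'a E'b; apply/esym/op_fun_repE; first exact: E'M.
by apply/PsiM => //; exists (psi b x); split; exact: op_fun_repP.
Qed.

Lemma op_fun_repB e u v : E' e -> psi e (u - v) = psi e u - psi e v.
Proof. by move=> E'e; apply: op_funB; exact: Psi_bounded. Qed.

Lemma anchor_set_eq0 M x :
  anchor_set E' Psi M -> (forall m, M m -> psi m x = 0) -> x = 0.
Proof.
move=> [ME' _ ker0] psi0; apply: ker0 => m Mm.
by rewrite -(psi0 m Mm); exact/op_fun_repP/ME'.
Qed.

Lemma anc_calcE g x y :
  anc_calc E' Psi g x y <->
  (forall e', bracket E' g e' -> psi e' y = psi (e' * g) x).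
Proof.
split=> [calc_g e' [E'e' E'e'g] | psi_eq e' [E'e' E'e'g]].
  have [w [Pe'y Pe'gx]] := calc_g e' (conj E'e' E'e'g).
  by rewrite -(op_fun_repE E'e' Pe'y) -(op_fun_repE E'e'g Pe'gx).
exists (psi e' y); split; first exact: op_fun_repP.
by rewrite psi_eq //; exact: op_fun_repP.
Qed.

Lemma anc_calc_dom_closed g T :
  is_bounded_op T -> op_sub (anc_calc E' Psi g) T ->
  closed (op_dom (anc_calc E' Psi g)).
Proof.
move=> T_bounded calc_sub.
have -> : op_dom (anc_calc E' Psi g) =
    \bigcap_(e' in bracket E' g) [set x | psi e' (op_fun T x) = psi (e' * g) x].
  apply/seteqP; split=> [x [y calc_y] e' e'g | x x_eq].
    have /(op_funE T_bounded) /= <- := calc_sub _ _ calc_y.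
    exact: (proj1 (anc_calcE _ _ _) calc_y).
  by exists (op_fun T x); apply/anc_calcE.
apply: closed_bigI => e' [E'e' E'e'g]; apply: closed_eq_fun.
  have T_cont := op_fun_continuous T_bounded.
  have e'_cont := op_fun_continuous (Psi_bounded E'e').
  by move=> z; apply: continuous_comp; [exact: T_cont | exact: e'_cont].
exact: op_fun_continuous (Psi_bounded E'e'g).
Qed.

(* The kernel test against E' can be moved through [d] because every
   [bracket E' (e * d)] is itself an anchor set. *)
Lemma anc_op_funMl d a b x y :
  anchor_set E' Psi E' -> anc E' Psi d ->
  E' a -> E' b -> E' (d * a) -> E' (d * b) ->
  psi a y = psi b x -> psi (d * a) y = psi (d * b) x.
Proof.
move=> E'_anchor anc_d E'a E'b E'da E'db psi_ab.
apply/eqP; rewrite -subr_eq0; apply/eqP.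
apply: (anchor_set_eq0 E'_anchor) => e E'e.
apply: anchor_set_eq0 (anc_d e E'e) _ => k [E'k E'ked].
have E'ke : E' (k * e) by exact: E'M.
have E'ked' : E' (k * e * d) by rewrite -mulrA.
rewrite (op_fun_repB _ _ E'e) (op_fun_repB _ _ E'k) -!(op_fun_repM _ E'k E'e).
rewrite -!(op_fun_repM _ E'ke) //.
by rewrite !mulrA !(op_fun_repM _ E'ked') // psi_ab subrr.
Qed.

End AnchorCalculus.

Section CalculusComparison.
Variables (R : realType) (X : normedModType R[i]) (G : algType R[i]).
Variables (F E E' : set G) (Phi Psi : G -> op X).

Hypothesis FM : forall a b, F a -> F b -> F (a * b).
Hypothesis F1 : F 1.
Hypothesis Phi_linop : forall g, F g -> is_linop (Phi g).
Hypothesis E0 : E 0.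
Hypothesis EF : E `<=` F.
Hypothesis E_core : algebraic_core F Phi E.
Hypothesis E'M : forall a b, E' a -> E' b -> E' (a * b).
Hypothesis EE' : E `<=` E'.
Hypothesis Psi_rep : is_representation E' Psi.
Hypothesis Psi_Phi : forall e, E e -> op_eq (Psi e) (Phi e).

Local Notation psi e := (op_fun (Psi e)).

Definition anc_multipliers : set G :=
  [set d | anc E' Psi d /\ forall e, E e -> E' (d * e)].

Definition anchored_factorization (f : G) : Prop :=
  forall e', E' e' -> exists M, anchor_set E' Psi M /\
    forall m, M m -> exists d e, [/\ anc_multipliers d, bracket E f e & m * e' = d * e].

Lemma bracket_anchor_set g : F g -> anchor_set E' Psi (bracket E g).
Proof.
move=> Fg; split; first by move=> e [/EE'].
  by exists 0; split; rewrite ?mul0r.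
move=> x ker_x.
have Phi_g0x : Phi g 0 x.
  apply/(proj2 E_core g Fg) => e [Ee Eeg]; exists 0; split; first exact/Psi_Phi/ker_x.
  by case: (Phi_linop (EF Eeg)).
by case: (Phi_linop Fg) => Phi_g00 _ /(_ 0 x 0 Phi_g0x Phi_g00).
Qed.

Lemma anc_calc_sub_Phi g : F g -> op_sub (anc_calc E' Psi g) (Phi g).
Proof.
move=> Fg x y calc_g; apply/(proj2 E_core g Fg) => e [Ee Eeg].
have [w [Psi_ey Psi_egx]] := calc_g e (conj (EE' Ee) (EE' Eeg)).
by exists w; split; apply/Psi_Phi.
Qed.

Lemma anc_calc_eq_of_total g :
  F g -> op_dom (anc_calc E' Psi g) = setT -> op_eq (Phi g) (anc_calc E' Psi g).
Proof.
move=> Fg calc_total x y; split; last exact: anc_calc_sub_Phi.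
have [y' calc_y'] : op_dom (anc_calc E' Psi g) x by rewrite calc_total.
case: (Phi_linop Fg) => _ _ Phi_fun Phi_y.
by rewrite (Phi_fun _ _ _ Phi_y (anc_calc_sub_Phi Fg calc_y')).
Qed.

Lemma anc_calc_total_of_dense g :
  F g -> is_bounded_op (Phi g) -> densely_defined (anc_calc E' Psi g) ->
  op_dom (anc_calc E' Psi g) = setT.
Proof.
move=> Fg Phi_bounded dense.
by have /closure_id -> := anc_calc_dom_closed Psi_rep Phi_bounded (anc_calc_sub_Phi Fg).
Qed.

Section Factorization.
Variables (f : G) (Ff : F f) (fact : anchored_factorization f).

Lemma anc_of_anchored_factorization : anc E' Psi f.
Proof.
move=> e' E'e'; have [M [AM Mfact]] := fact E'e'; have [ME' _ _] := AM.
apply: (anchor_setS AM) => [m Mm|z []//]; split; first exact: ME'.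
have [d [e [[_ dE] [_ Eef] me'_de]]] := Mfact m Mm.
by rewrite mulrA me'_de -mulrA; exact: dE.
Qed.

Lemma Phi_sub_anc_calc : op_sub (Phi f) (anc_calc E' Psi f).
Proof.
have E'_anchor : anchor_set E' Psi E'.
  by apply: anchor_setS (bracket_anchor_set Ff) _ _ => // e [/EE'].
move=> x y Phi_fxy; apply/(anc_calcE Psi_rep) => e' [E'e' E'e'f].
have [M [AM Mfact]] := fact E'e'; have [ME' _ _] := AM.
apply/eqP; rewrite -subr_eq0; apply/eqP; apply: (anchor_set_eq0 Psi_rep AM) => m Mm.
have [d [e [[anc_d dE] [Ee Eef] me'_de]]] := Mfact m Mm.
have E'm := ME' _ Mm.
rewrite (op_fun_repB Psi_rep) // -!(op_fun_repM E'M Psi_rep) // mulrA me'_de -mulrA.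
apply/eqP; rewrite subr_eq0; apply/eqP.
apply: (anc_op_funMl E'M Psi_rep E'_anchor anc_d (EE' Ee) (EE' Eef));
  [exact: dE | exact: dE |].
have [w [Phi_eyw Phi_efxw]] := proj1 (proj2 E_core f Ff x y) Phi_fxy e (conj Ee Eef).
rewrite -(op_fun_repE Psi_rep (EE' Ee) (proj2 (Psi_Phi Ee _ _) Phi_eyw)).
by rewrite -(op_fun_repE Psi_rep (EE' Eef) (proj2 (Psi_Phi Eef _ _) Phi_efxw)).
Qed.

End Factorization.

Lemma anc_calc_eq_of_factorization f :
  F f -> anchored_factorization f -> anc E' Psi f /\ op_eq (Phi f) (anc_calc E' Psi f).
Proof.
move=> Ff fact; split; first exact: anc_of_anchored_factorization.
by move=> x y; split; [exact: Phi_sub_anc_calc | exact: anc_calc_sub_Phi].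
Qed.

Lemma sub_anc_of_sub_dom : E' `<=` F -> F `<=` anc E' Psi.
Proof.
move=> E'F g Fg e E'e.
apply: anchor_setS (bracket_anchor_set (FM (E'F _ E'e) Fg)) _ _; last by move=> z [].
by move=> z [Ez Ezeg]; split; apply: EE'.
Qed.

Lemma anchored_factorization_of_sub f : F f -> E' `<=` E -> anchored_factorization f.
Proof.
move=> Ff E'E e' E'e'.
have F_anc := sub_anc_of_sub_dom (fun e E'e => EF (E'E e E'e)).
exists (bracket E' (e' * f)); split; first exact: F_anc Ff e' E'e'.
move=> m [E'm E'me'f]; exists 1, (m * e'); split; last by rewrite mul1r.
- by split; [exact: F_anc F1 | move=> e Ee; rewrite mul1r; exact: EE'].
- by split; apply: E'E; [exact: E'M | rewrite -mulrA].
Qed.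

Lemma anchored_factorization_of_center f :
  anchor_set E' Psi (alg_center E' `&` bracket E f) -> anchored_factorization f.
Proof.
move=> AZ e' E'e'; exists (alg_center E' `&` bracket E f); split => //.
move=> m [[_ m_central] fm]; exists e', m; split => //; last exact: m_central.
split; first exact: (sub_anc E'M AZ E'e').
by move=> e Ee; apply: E'M => //; exact: EE'.
Qed.

Lemma center_anchor_set_of_central f :
  F f -> E `<=` alg_center E' -> anchor_set E' Psi (alg_center E' `&` bracket E f).
Proof.
move=> Ff E_central; apply: anchor_setS (bracket_anchor_set Ff) _ _.
  by move=> e [Ee Eef]; split => //; exact: E_central.
by move=> e [[]].
Qed.

End CalculusComparison.

Theorem theorem6p7 (R : realType) (X : completeNormedModType R[i])
  (G : algType R[i]) (F E E' : set G) (Phi Psi : G -> op X) (f : G) :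
  is_unital_subalgebra F ->
  is_calculus F Phi ->
  is_subalgebra E -> E `<=` F ->
  algebraic_core F Phi E ->
  is_subalgebra E' -> E `<=` E' ->
  is_representation E' Psi ->
  (forall e, E e -> op_eq (Psi e) (Phi e)) ->
  F f ->
  let F' := anc E' Psi in
  let PsiF := anc_calc E' Psi in
  let D' := [set d | F' d /\ forall e, E e -> E' (d * e)] in
  (   (* (1) *) (F' f /\ is_bounded_op (PsiF f))
   \/ (* (2) *) [/\ F' f, densely_defined (PsiF f) & is_bounded_op (Phi f)]
   \/ (* (3) *) (forall e', E' e' -> exists M, anchor_set E' Psi M /\
                  forall m, M m -> exists d e, [/\ D' d, bracket E f e & m * e' = d * e])
   \/ (* (4) *) E' = E
   \/ (* (5) *) anchor_set E' Psi (alg_center E' `&` bracket E f)%classic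
   \/ (* (6) *) E `<=` alg_center E'
   \/ (* (7) *) (forall a b, E' a -> E' b -> a * b = b * a)) ->
  F' f /\ op_eq (Phi f) (PsiF f).
Proof.
move=> [[_ _ FM _] F1] [[Phi_closed _ _ _ _] _] [E0 _ _ _] EF E_core [_ _ E'M _] EE'
  Psi_rep Psi_Phi Ff F' PsiF D' conditions.
have Phi_linop g : F g -> is_linop (Phi g) by case/Phi_closed.
have eq_of_total := anc_calc_eq_of_total Phi_linop E_core EE' Psi_Phi Ff.
have eq_of_fact :=
  anc_calc_eq_of_factorization Phi_linop E0 EF E_core E'M EE' Psi_rep Psi_Phi Ff.
have fact_of_center := @anchored_factorization_of_center _ _ _ _ _ Psi E'M EE' f.
have center_anchor := center_anchor_set_of_central Phi_linop E0 EF E_core EE' Psi_Phi Ff.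
case: conditions => [[anc_f Psi_bounded] | [[anc_f dense Phi_bounded] | conditions]].
- by split => //; apply/eq_of_total/bounded_op_dom.
- split => //; apply/eq_of_total.
  exact: (anc_calc_total_of_dense E_core EE' Psi_rep Psi_Phi Ff).
case: conditions => [fact | [E'E | [Z_anchor | [E_central | E'_comm]]]].
- exact: eq_of_fact.
- apply/eq_of_fact.
  apply: (anchored_factorization_of_sub FM F1 Phi_linop E0 EF E_core E'M EE' Psi_Phi Ff).
  by rewrite E'E.
- exact/eq_of_fact/fact_of_center.
- exact/eq_of_fact/fact_of_center/center_anchor.
- apply/eq_of_fact/fact_of_center/center_anchor => e Ee.
  by split=> [|e' E'e']; [exact: EE' | apply: E'_comm => //; exact: EE'].
Qed.
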